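(* Let $f:X\to\mathcal G$ be a convex function and $x,u\in X$. Define $g:(0,+\infty)\to\mathcal G$ by $g(t)=\frac1t\big(f(x+tu)\ominus f(x)\big)$. Then for all $0<s\le t$ it holds $g(s)\supseteq g(t)$.
   Context: $X$ is a real linear space, $Z$ a real locally convex Hausdorff space, $C\subseteq Z$ a closed convex cone with $0\in C$ and nontrivial $C^-=\{z^*\in Z^*: z^*(c)\le 0\ \forall c\in C\}$. $\mathcal G=\{A\subseteq Z: A=\operatorname{cl}\operatorname{co}(A+C)\}$; $A\oplus B=\operatorname{cl}\{a+b: a\in A, b\in B\}$, $tA=\{ta: a\in A\}$ ($t>0$), $A\ominus B=\{z\in Z: B+\{z\}\subseteq A\}$. $f$ is convex if $f(tx_1+(1-t)x_2)\supseteq tf(x_1)\oplus(1-t)f(x_2)$ for all $x_1,x_2\in X$, $t\in(0,1)$. *)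

From HB Require Import structures.
From mathcomp Require Import all_boot all_order all_algebra.
From mathcomp Require Import all_classical all_reals all_analysis.
Set Implicit Arguments. Unset Strict Implicit. Unset Printing Implicit Defensive.
Import Order.TTheory GRing.Theory Num.Theory.
Local Open Scope classical_set_scope.
Local Open Scope ring_scope.

Section SetValued.
Context {R : realType} {Z : tvsType R}.

Definition convexS (A : set Z) : Prop :=
  forall a b (t : R), 0 <= t -> t <= 1 -> A a -> A b -> A (t *: a + (1 - t) *: b).

Definition conv_hull (A : set Z) : set Z :=
  fun z => forall K : set Z, convexS K -> A `<=` K -> K z.

Definition msum (A B : set Z) : set Z :=
  fun z => exists a, A a /\ exists b, B b /\ z = a + b.

Definition inG (C : set Z) (A : set Z) : Prop :=
  A = closure (conv_hull (msum A C)).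

Definition oplus (A B : set Z) : set Z := closure (msum A B).

Definition sscale (t : R) (A : set Z) : set Z :=
  fun z => exists a, A a /\ z = t *: a.

Definition ominus (A B : set Z) : set Z :=
  fun z => forall b, B b -> A (b + z).

Definition negdual_nontrivial (C : set Z) : Prop :=
  exists zs : {linear Z -> R^o},
    continuous (zs : Z -> R^o) /\ (exists z, zs z != 0) /\
    (forall c, C c -> zs c <= 0).

End SetValued.

Definition convex_sv {R : realType} {X : lmodType R} {Z : tvsType R}
  (f : X -> set Z) : Prop :=
  forall (x1 x2 : X) (t : R), 0 < t -> t < 1 ->
    oplus (sscale t (f x1)) (sscale (1 - t) (f x2)) `<=` f (t *: x1 + (1 - t) *: x2).

Definition gdiff {R : realType} {X : lmodType R} {Z : tvsType R}
  (f : X -> set Z) (x u : X) (t : R) : set Z :=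
  sscale t^-1 (ominus (f (x + t *: u)) (f x)).

From HB Require Import structures.
From mathcomp Require Import all_boot all_order all_algebra.
From mathcomp Require Import all_classical all_reals all_analysis.
Import Order.TTheory GRing.Theory Num.Theory.
Local Open Scope classical_set_scope.
Local Open Scope ring_scope.

(* For s < t, the point x + s u is the convex combination of x + t u and x
   with weight s / t.  If w + f x lies in f (x + t u), then convexity of f
   gives (s / t) w + f x in f (x + s u): write b + (s / t) w as
   (s / t) (b + w) + (1 - s / t) b.  Rescaling by 1 / s yields g t in g s. *)

Section DifferenceQuotient.
Variables (R : realType) (X : lmodType R) (Z : tvsType R).

Lemma sscaleA (a b : R) (A : set Z) :
  sscale a (sscale b A) = sscale (a * b) A.
Proof.
rewrite predeqE => z; split.
  by move=> [_ [[w [Aw ->]] ->]]; exists w; rewrite scalerA.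
by move=> [w [Aw ->]]; exists (b *: w); split; [exists w | rewrite scalerA].
Qed.

Lemma sscaleS (a : R) (A B : set Z) :
  A `<=` B -> sscale a A `<=` sscale a B.
Proof. by move=> AB _ [w [Aw ->]]; exists w; split => //; apply: AB. Qed.

Lemma convex_comb_ray (x u : X) (s t : R) : t != 0 ->
  (s / t) *: (x + t *: u) + (1 - s / t) *: x = x + s *: u.
Proof.
move=> t0; rewrite scalerDr scalerA mulfVK // addrAC -scalerDl.
by rewrite addrCA subrr addr0 scale1r.
Qed.

Lemma convex_sv_ominus (f : X -> set Z) (x y : X) (l : R) :
  convex_sv f -> 0 < l -> l < 1 ->
  sscale l (ominus (f y) (f x)) `<=` ominus (f (l *: y + (1 - l) *: x)) (f x).
Proof.
move=> fcvx l0 l1 _ [w [hw ->]] b fxb.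
apply: fcvx => //; apply: subset_closure.
exists (l *: (b + w)); split; first by exists (b + w); split => //; apply: hw.
exists ((1 - l) *: b); split; first by exists b.
by rewrite scalerDr addrAC -scalerDl addrCA subrr addr0 scale1r addrC.
Qed.

Lemma gdiff_antitone (f : X -> set Z) (x u : X) (s t : R) :
  convex_sv f -> 0 < s -> s <= t -> gdiff f x u t `<=` gdiff f x u s.
Proof.
move=> fcvx s0 st; have t0 : 0 < t by apply: lt_le_trans st.
have [-> // | nst] := eqVneq s t.
have l0 : 0 < s / t by rewrite divr_gt0.
have l1 : s / t < 1 by rewrite ltr_pdivrMr // mul1r lt_neqAle nst.
have -> : gdiff f x u t =
    sscale s^-1 (sscale (s / t) (ominus (f (x + t *: u)) (f x))).
  by rewrite sscaleA mulrA mulVf ?mul1r // gt_eqF.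
apply: sscaleS; rewrite -(convex_comb_ray x u s t (lt0r_neq0 t0)).
exact: convex_sv_ominus.
Qed.

End DifferenceQuotient.

Theorem mainTheorem7 (R : realType) (X : lmodType R) (Z : tvsType R)
  (hZ : hausdorff_space Z) (C : set Z)
  (hCcl : closed C) (hCcv : convexS C) (hC0 : C 0)
  (hCcone : forall (t : R) (c : Z), 0 < t -> C c -> C (t *: c))
  (hCdual : negdual_nontrivial C)
  (f : X -> set Z) (hfG : forall x, inG C (f x)) (hf : convex_sv f)
  (x u : X) :
  forall s t : R, 0 < s -> s <= t -> gdiff f x u t `<=` gdiff f x u s.
Proof. by move=> s t s0 st; apply: gdiff_antitone. Qed.
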